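(* Let $M>0$. There exist a real Banach space $(X,\|\cdot\|)$ that is linearly isomorphic to $\ell_1$ and an approximately convex set $A\subseteq B_M(X)$ such that $$\mathcal{H}(A,\operatorname{Co}(A))=\operatorname{diam}(A)=2M.$$
   Context: $B_M(X)=\{x\in X:\|x\|\le M\}$. A set $A$ is approximately convex if $d(tx+(1-t)y,A)\le1$ for all $x,y\in A$, $t\in[0,1]$, where $d(x,A)=\inf_{a\in A}\|x-a\|$. $\mathcal{H}$ is the Hausdorff distance, $\operatorname{Co}$ the convex hull, $\operatorname{diam}(A)=\sup\{\|x-y\|:x,y\in A\}$. *)

From HB Require Import structures.
From mathcomp Require Import all_boot all_order all_algebra.
From mathcomp Require Import all_classical all_reals all_analysis.
Set Implicit Arguments. Unset Strict Implicit. Unset Printing Implicit Defensive.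
Import Order.TTheory GRing.Theory Num.Theory.
Import numFieldNormedType.Exports.
Local Open Scope classical_set_scope.
Local Open Scope ring_scope.

Section Defs.
Variables (R : realType) (X : normedModType R).

Definition ballM (M : R) : set X := [set x | `|x| <= M].

(* d(x,A) = inf_{a in A} ||x - a||  (extended real, +oo if A empty) *)
Definition dist_set (x : X) (A : set X) : \bar R :=
  ereal_inf [set (`|x - a|)%:E | a in A].

Definition diam (A : set X) : \bar R :=
  ereal_sup [set (`|x - y|)%:E | x in A & y in A].

Definition hausdorff (A B : set X) : \bar R :=
  Order.max (ereal_sup [set dist_set a B | a in A])
            (ereal_sup [set dist_set b A | b in B]).

Definition conv_hull (A : set X) : set X :=
  [set x | exists (n : nat) (l : 'I_n -> R) (a : 'I_n -> X),
     (forall i, 0 <= l i) /\ \sum_(i < n) l i = 1 /\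
     (forall i, A (a i)) /\ x = \sum_(i < n) l i *: a i].

Definition approx_convex (A : set X) : Prop :=
  forall x y (t : R), A x -> A y -> 0 <= t <= 1 ->
    (dist_set (t *: x + (1 - t) *: y)%R A <= 1%:E)%E.

End Defs.

(* l1 norm of a real sequence (extended real, +oo if not summable) *)
Definition l1norm (R : realType) (u : nat -> R) : \bar R :=
  (\sum_(0 <= k <oo) (`|u k|)%:E)%E.

(* X is linearly (topologically) isomorphic to l_1: there is a linear bijection
   T : X -> l_1 which is bounded with bounded inverse. *)
Definition iso_to_l1 (R : realType) (X : normedModType R) : Prop :=
  exists (T : X -> nat -> R),
    (forall x y, T (x + y) = (fun n => T x n + T y n)) /\
    (forall (a : R) x, T (a *: x) = (fun n => a * T x n)) /\
    (exists c C : R, 0 < c /\ 0 < C /\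
       forall x, ((c * `|x|)%:E <= l1norm (T x))%E /\ (l1norm (T x) <= (C * `|x|)%:E)%E) /\
    (forall u : nat -> R, (l1norm u < +oo)%E -> exists x, T x = u).

(** Take X = l1 itself and a rate q < 1 with (1 - q) 2M <= 1.  Let A consist of
    the nonnegative finitely supported vectors of norm M which, for every l,
    carry at most M q^l of their mass outside some set S l of at most 2^l
    coordinates, all the S l sharing a coordinate p.  If x, y are in A, a
    convex combination z of them carries at most M q^l outside S_x l ++ S_y l;
    moving the fraction 1 - q of z onto the coordinate p of x costs at most
    (1 - q) 2M <= 1 and lands in A, with S_x l ++ S_y l as level l + 1.  So A
    is approximately convex.  But the average of M e_0, ..., M e_(N-1) lies in
    Co A, and any a in A shares at most 2^l M / N + M q^l of mass with it
    (split the coordinates along S_a l), so its distance to A tends to 2M. *)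

From HB Require Import structures.
From mathcomp Require Import all_boot all_order all_algebra.
From mathcomp Require Import all_classical all_reals all_analysis.
From mathcomp Require Import ring lra.
Import Order.TTheory GRing.Theory Num.Theory.
Import numFieldNormedType.Exports.
Set Implicit Arguments.
Unset Strict Implicit.
Unset Printing Implicit Defensive.
Local Open Scope classical_set_scope.
Local Open Scope ring_scope.

Section L1norm.
Context {R : realType}.
Implicit Types u v : nat -> R.

Lemma l1norm_ge0 u : (0 <= l1norm u)%E.
Proof. by apply: nneseries_ge0 => n _ _; rewrite lee_fin. Qed.

Lemma l1norm_ge_psum u n : ((\sum_(k < n) `|u k|)%:E <= l1norm u)%E.
Proof.
have := @nneseries_lim_ge R (fun k => (`|u k|)%:E) xpredT 0 n.
by rewrite big_mkord sumEFin; apply => k _ _; rewrite lee_fin.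
Qed.

Lemma l1norm_le_psum v (r : R) :
  (forall n, \sum_(k < n) `|v k| <= r) -> (l1norm v <= r%:E)%E.
Proof.
move=> le_vr; apply: lime_le.
  by apply: is_cvg_nneseries => k _ _; rewrite lee_fin.
by apply: nearW => n; rewrite sumEFin lee_fin big_mkord.
Qed.

Lemma l1normD u v : (l1norm (u + v)%R <= l1norm u + l1norm v)%E.
Proof.
rewrite /l1norm -nneseriesD => [||k _ _]; last by rewrite lee_fin.
- apply: lee_nneseries => [k _ _|k _]; first by rewrite lee_fin.
  by rewrite -EFinD lee_fin ler_normD.
- by move=> k _ _; rewrite lee_fin.
Qed.

Lemma l1normZ (a : R) u : l1norm (a *: u)%R = ((`|a|)%:E * l1norm u)%E.
Proof.
rewrite /l1norm -nneseriesZl => [|k _]; last by rewrite lee_fin.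
by apply: eq_eseriesr => k _; rewrite -EFinM normrM.
Qed.

Lemma l1normN u : l1norm (- u)%R = l1norm u.
Proof. by rewrite -scaleN1r l1normZ normrN normr1 mul1e. Qed.

Lemma l1norm0 : l1norm (0 : nat -> R) = 0%E.
Proof. by rewrite -(scale0r (0 : nat -> R)) l1normZ normr0 mul0e. Qed.

Lemma l1norm_eq0 u : l1norm u = 0%E -> u = 0.
Proof.
move=> u0; apply/funext => k; apply/normr0_eq0/le_anti; rewrite normr_ge0 andbT.
have := l1norm_ge_psum u k.+1; rewrite u0 lee_fin big_ord_recr /=.
by apply: le_trans; rewrite lerDr sumr_ge0.
Qed.

End L1norm.

Section L1Space.
Variable R : realType.

Definition abs_summable : {pred nat -> R} := fun u => (l1norm u < +oo)%E.

Record l1 := L1 { l1val : nat -> R; l1P : abs_summable l1val }.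

HB.instance Definition _ := [isSub for l1val].
HB.instance Definition _ := [Choice of l1 by <:].

Lemma abs_summable_submod_closed : subsemimod_closed abs_summable.
Proof.
split; first split.
- by rewrite /in_mem /= /abs_summable l1norm0 ltry.
- move=> u v; rewrite /in_mem /= => su sv.
  exact: le_lt_trans (l1normD u v) (lte_add_pinfty su sv).
- move=> a u; rewrite /in_mem /= /abs_summable l1normZ => su.
  by rewrite lte_mul_pinfty // l1norm_ge0.
Qed.

HB.instance Definition _ :=
  GRing.isSubmodClosed.Build R (nat -> R) abs_summable abs_summable_submod_closed.
HB.instance Definition _ := [SubChoice_isSubZmodule of l1 by <:].
HB.instance Definition _ := [SubZmodule_isSubLmodule of l1 by <:].

Definition l1nrm (x : l1) : R := fine (l1norm (l1val x)).

Lemma l1normE (x : l1) : l1norm (l1val x) = (l1nrm x)%:E.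
Proof. by rewrite fineK // ge0_fin_numE ?l1norm_ge0 //; apply: l1P. Qed.

Lemma l1nrmD (x y : l1) : l1nrm (x + y) <= l1nrm x + l1nrm y.
Proof. by rewrite -lee_fin EFinD -!l1normE; apply: l1normD. Qed.

Lemma l1nrmZ (a : R) (x : l1) : l1nrm (a *: x) = `|a| * l1nrm x.
Proof. by apply: EFin_inj; rewrite EFinM -!l1normE l1normZ. Qed.

Lemma l1nrm_eq0 (x : l1) : l1nrm x = 0 -> x = 0.
Proof. by move=> x0; apply/val_inj/l1norm_eq0; rewrite l1normE x0. Qed.

HB.instance Definition _ := Lmodule_isNormed.Build R l1 l1nrmD l1nrmZ l1nrm_eq0.

Lemma psum_le_norm (x : l1) n : \sum_(k < n) `|l1val x k| <= `|x|.
Proof. by rewrite -lee_fin (_ : `|x| = l1nrm x) // -l1normE l1norm_ge_psum. Qed.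

Lemma norm_le_psum (x : l1) (r : R) :
  (forall n, \sum_(k < n) `|l1val x k| <= r) -> `|x| <= r.
Proof.
by move=> /l1norm_le_psum; rewrite (_ : `|x| = l1nrm x) // l1normE lee_fin.
Qed.

Lemma l1_iso : iso_to_l1 l1.
Proof.
exists l1val; split => //; split => //; split.
  by exists 1, 1; split=> //; split=> // x; rewrite l1normE !mul1r lexx.
by move=> u su; exists (L1 su).
Qed.

End L1Space.

Section L1Complete.
Context {R : realType}.
Local Notation X := (l1 R).

Lemma l1_coord_cvg (F : set_system X) : ProperFilter F -> cauchy F ->
  forall k, cvg ((fun x : X => l1val x k) @ F).
Proof.
move=> FF /cauchyP Fc k; apply/cauchy_cvgP; apply: cauchy_exP => e e0.
have [x0 Fx0] := Fc e e0; exists (l1val x0 k).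
change (F [set y : X | ball (l1val x0 k) e (l1val y k)]).
apply: filterS Fx0 => y; rewrite /ball /=; apply: le_lt_trans.
have := psum_le_norm (x0 - y) k.+1; rewrite big_ord_recr /=.
by apply: le_trans; rewrite lerDr sumr_ge0.
Qed.

Lemma l1norm_sub_lim (F : set_system X) (u : nat -> R) (x0 : X) (e : R) :
  ProperFilter F -> (forall k, (fun x : X => l1val x k) @ F --> u k) ->
  F (ball x0 e) -> (l1norm (l1val x0 - u)%R <= e%:E)%E.
Proof.
move=> FF cvg_u Fx0; apply: l1norm_le_psum => n.
have cvg_psum : (fun y : X => \sum_(k < n) `|l1val x0 k - l1val y k|) @ F -->
    \sum_(k < n) `|l1val x0 k - u k|.
  apply: cvg_big => [|k _]; first exact: add_continuous.
  by apply: cvg_norm; apply: cvgB => //; apply: cvg_cst.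
have near_le : \forall y \near F, \sum_(k < n) `|l1val x0 k - l1val y k| <= e.
  apply: filterS Fx0 => y /ltW; apply: le_trans.
  exact: psum_le_norm (x0 - y) n.
exact: closed_cvg _ (@closed_le _ e) near_le _ cvg_psum.
Qed.

Lemma l1_complete (F : set_system X) : ProperFilter F -> cauchy F -> cvg F.
Proof.
move=> FF /cauchyP Fc; pose u k := lim ((fun x : X => l1val x k) @ F).
have cvg_u k : (fun x : X => l1val x k) @ F --> u k.
  by apply: l1_coord_cvg => //; apply/cauchyP.
have near_u e : 0 < e ->
    exists2 x0 : X, F (ball x0 e) & (l1norm (l1val x0 - u)%R <= e%:E)%E.
  move=> e0; have [x0 Fx0] := Fc e e0.
  by exists x0 => //; apply: l1norm_sub_lim Fx0.
have su : abs_summable u.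
  have [x1 _ x1u] := near_u 1 ltr01.
  have -> : u = (l1val x1 - (l1val x1 - u))%R by rewrite subKr.
  rewrite /abs_summable; apply: le_lt_trans (l1normD _ _) _; rewrite l1normN.
  rewrite lte_add_pinfty //; first exact: (l1P x1).
  by rewrite (le_lt_trans x1u) ?ltry.
apply/cvg_ex; exists (L1 su); apply/fcvgrPdist_lt => e e0.
have [x0 Fx0 x0u] := near_u (e / 2) (divr_gt0 e0 (ltr0Sn _ 1)).
apply: filterS Fx0 => y x0y; rewrite -(subrK x0 (L1 su)) -addrA.
apply: le_lt_trans (ler_normD _ _) _; rewrite [e in _ < e]splitr ler_ltD //.
rewrite -lee_fin (_ : `|_| = l1nrm (L1 su - x0)) // -l1normE.
by rewrite (_ : l1val _ = - (l1val x0 - u))%R ?l1normN // opprB.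
Qed.

HB.instance Definition _ := Uniform_isComplete.Build X l1_complete.

End L1Complete.

Section SetDistance.
Context {R : realType} {X : normedModType R}.
Implicit Types (A B : set X) (x : X).

Lemma dist_set_le x A a : A a -> (dist_set x A <= (`|x - a|)%:E)%E.
Proof.
by move=> Aa; apply: ge_ereal_inf; exists (`|x - a|)%:E => //; exists a.
Qed.

Lemma dist_set_ge x A (r : R) :
  (forall a, A a -> r <= `|x - a|) -> (r%:E <= dist_set x A)%E.
Proof.
by move=> le_r; apply: le_ereal_inf_tmp => _ [a Aa <-]; rewrite lee_fin le_r.
Qed.

Lemma sub_conv_hull A : A `<=` conv_hull A.
Proof.
move=> a Aa; exists 1%N, (fun=> 1), (fun=> a).
by rewrite !big_ord1 scale1r.
Qed.

Lemma conv_hull_sub_ballM (M : R) A : A `<=` ballM M -> conv_hull A `<=` ballM M.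
Proof.
move=> AM _ [n [l [a [l0 [l1 [Aa ->]]]]]]; rewrite /ballM /=.
apply: le_trans (ler_norm_sum _ _ _) _.
apply: (@le_trans _ _ (\sum_(i < n) l i * M)); last by rewrite -mulr_suml l1 mul1r.
by apply: ler_sum => i _; rewrite normrZ ger0_norm // ler_wpM2l //; apply: AM.
Qed.

Lemma diam_sub_ballM (M : R) A : A `<=` ballM M -> (diam A <= (2 * M)%:E)%E.
Proof.
move=> AM; apply: ge_ereal_sup => _ [x Ax [y Ay <-]]; rewrite lee_fin.
apply: le_trans (ler_normB _ _) _.
by have := AM x Ax; have := AM y Ay; rewrite /ballM /=; lra.
Qed.

Lemma hausdorff_subset A B : A !=set0 -> A `<=` B ->
  hausdorff A B = ereal_sup [set dist_set b A | b in B].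
Proof.
move=> [a0 Aa0] AB; rewrite /hausdorff max_r //; apply: (@le_trans _ _ 0%E).
  apply: ge_ereal_sup => _ [a Aa <-]; apply: le_trans (dist_set_le _ (AB _ Aa)) _.
  by rewrite subrr normr0.
apply: le_ereal_sup_tmp; exists (dist_set a0 A); first by exists a0 => //; apply: AB.
exact: dist_set_ge.
Qed.

Lemma near_mix_approx_convex A :
  (forall x y (t : R), A x -> A y -> 0 <= t <= 1 ->
     exists2 w, A w & `|t *: x + (1 - t) *: y - w| <= 1) ->
  approx_convex A.
Proof.
move=> near_mix x y t Ax Ay t01; have [w Aw le_w] := near_mix x y t Ax Ay t01.
by apply: le_trans (dist_set_le _ Aw) _; rewrite lee_fin.
Qed.

End SetDistance.

Section FiniteSupport.
Context {R : realType}.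
Local Notation X := (l1 R).
Implicit Types (x y : X) (K : nat) (P : pred nat).

Lemma ler_sum_ord_widen (f : nat -> R) n m : (forall k, 0 <= f k) ->
  (n <= m)%N -> \sum_(k < n) f k <= \sum_(k < m) f k.
Proof.
move=> f0 nm; rewrite (big_ord_widen m f nm).
by rewrite [leRHS](bigID (fun k : 'I_m => (k < n)%N)) /= lerDl sumr_ge0.
Qed.

Lemma big_ord_support (f : nat -> R) K m : (forall k, (K <= k)%N -> f k = 0) ->
  (K <= m)%N -> \sum_(k < m) f k = \sum_(k < K) f k.
Proof.
move=> f0 Km; rewrite (big_ord_widen m f Km) [RHS]big_mkcond /=.
by apply: eq_bigr => k _; case: ltnP => // /f0.
Qed.

Lemma psum_le_finsupp (v : nat -> R) K n : (forall k, (K <= k)%N -> v k = 0) ->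
  \sum_(k < n) `|v k| <= \sum_(k < K) `|v k|.
Proof.
move=> v0; rewrite -(@big_ord_support (fun k => `|v k|) K (maxn n K)).
- by apply: (@ler_sum_ord_widen (fun k => `|v k|)); rewrite ?leq_maxl.
- by move=> k /v0 ->; rewrite normr0.
- exact: leq_maxr.
Qed.

Lemma abs_summable_finsupp (v : nat -> R) K :
  (forall k, (K <= k)%N -> v k = 0) -> abs_summable v.
Proof.
move=> v0; apply: (@le_lt_trans _ _ (\sum_(k < K) `|v k|)%:E); first last.
  by rewrite ltry.
by apply: l1norm_le_psum => n; apply: psum_le_finsupp.
Qed.

Lemma norm_finsupp x K : (forall k, (K <= k)%N -> l1val x k = 0) ->
  `|x| = \sum_(k < K) `|l1val x k|.
Proof.
move=> x0; apply/le_anti; rewrite psum_le_norm andbT.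
by apply: norm_le_psum => n; apply: psum_le_finsupp.
Qed.

Lemma l1val_sum I (r : seq I) (Q : pred I) (f : I -> X) k :
  l1val (\sum_(i <- r | Q i) f i) k = \sum_(i <- r | Q i) l1val (f i) k.
Proof.
change (val (\sum_(i <- r | Q i) f i) k = \sum_(i <- r | Q i) val (f i) k).
by rewrite raddf_sum fct_sumE.
Qed.

Lemma l1valD x y k : l1val (x + y) k = l1val x k + l1val y k.
Proof. by []. Qed.

Lemma l1valZ (a : R) x k : l1val (a *: x) k = a * l1val x k.
Proof. by []. Qed.

Lemma card_ord_mem_le n (s : seq nat) :
  (#|[pred k : 'I_n | nat_of_ord k \in s]| <= size s)%N.
Proof.
rewrite cardE -(size_map val); apply: uniq_leq_size.
  by rewrite map_inj_uniq ?enum_uniq //; apply: val_inj.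
by move=> j /mapP[k]; rewrite mem_enum inE => ks ->.
Qed.

Definition mass K P x : R := \sum_(k < K | P k) l1val x k.

Lemma massD K P x y : mass K P (x + y) = mass K P x + mass K P y.
Proof. exact: big_split. Qed.

Lemma massZ K P (a : R) x : mass K P (a *: x) = a * mass K P x.
Proof. by rewrite /mass mulr_sumr. Qed.

Lemma mass_subset K P Q x : (forall k, 0 <= l1val x k) -> subpred P Q ->
  mass K P x <= mass K Q x.
Proof.
move=> x0 PQ; rewrite /mass (big_mkcond (fun k : 'I_K => P k)).
rewrite (big_mkcond (fun k : 'I_K => Q k)).
by apply: ler_sum => k _; case: ifP => [/PQ ->|_] //; case: ifP.
Qed.

Lemma mass_mem_le K (s : seq nat) x (b : R) : (forall k, 0 <= l1val x k <= b) ->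
  mass K [pred k | k \in s] x <= (size s)%:R * b.
Proof.
move=> xb; have b0 : 0 <= b by have /andP[/le_trans] := xb 0%N; apply.
apply: (@le_trans _ _ (\sum_(k < K | nat_of_ord k \in s) b)).
  by apply: ler_sum => k _; have /andP[] := xb k.
by rewrite sumr_const -[b *+ _]mulr_natl ler_wpM2r // ler_nat card_ord_mem_le.
Qed.

Lemma norm_finsupp_ge0 x K : (forall k, 0 <= l1val x k) ->
  (forall k, (K <= k)%N -> l1val x k = 0) -> `|x| = mass K predT x.
Proof.
by move=> x0 /norm_finsupp ->; apply: eq_bigr => k _; rewrite ger0_norm.
Qed.

Lemma mass_swap_le_dist K P x y :
  mass K predT x + mass K predT y - 2 * (mass K P x + mass K (predC P) y) <= `|x - y|.
Proof.
apply: le_trans (psum_le_norm (x - y) K).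
have -> : mass K P x + mass K (predC P) y =
    \sum_(k < K) (if P k then l1val x k else l1val y k).
  rewrite /mass (big_mkcond (fun k : 'I_K => P k)).
  rewrite (big_mkcond (fun k : 'I_K => predC P k)) -big_split /=.
  by apply: eq_bigr => k _; case: (P k); rewrite ?addr0 ?add0r.
rewrite mulr_sumr -big_split -sumrB /=; apply: ler_sum => k _.
have -> : (l1val x - l1val y) k = l1val x k - l1val y k by [].
have dxy := ler_norm (l1val x k - l1val y k).
have dyx := ler_norm (l1val y k - l1val x k); rewrite distrC in dyx.
by case: (P k); lra.
Qed.

Lemma abs_summable_delta i : abs_summable (fun k => (k == i)%:R : R).
Proof. by apply: (@abs_summable_finsupp _ i.+1) => k ik; rewrite gtn_eqF. Qed.

Definition delta i : X := L1 (abs_summable_delta i).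

Lemma delta_val i k : l1val (delta i) k = (k == i)%:R.
Proof. by []. Qed.

Lemma norm_delta i : `|delta i| = 1.
Proof.
rewrite (@norm_finsupp _ i.+1) => [|k ik]; last by rewrite /= gtn_eqF.
rewrite big_ord_recr /= eqxx normr1 big1 ?add0r // => k _.
by rewrite /= ltn_eqF ?normr0.
Qed.

Lemma mass_delta_out K P i : ~~ P i -> mass K P (delta i) = 0.
Proof.
by move=> Pi; apply: big1 => k Pk /=; case: eqP => // ki; move: Pi; rewrite -ki Pk.
Qed.

Lemma mass_delta K i : (i < K)%N -> mass K predT (delta i) = 1.
Proof.
move=> iK; rewrite /mass (bigD1 (Ordinal iK)) //= eqxx big1 ?addr0 // => k.
by rewrite -val_eqE /= => /negbTE ->.
Qed.

End FiniteSupport.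

Section Construction.
Context {R : realType} (M : R).
Hypothesis M_gt0 : 0 < M.
Local Notation X := (l1 R).

Definition decay : R := if 2 * M <= 1 then 0 else 1 - (2 * M)^-1.

Lemma decay_ge0 : 0 <= decay.
Proof.
rewrite /decay; case: ifP => // /negbT; rewrite -ltNge => M2_gt1.
by rewrite subr_ge0 invf_le1 ?ltW // (lt_trans ltr01).
Qed.

Lemma decay_lt1 : decay < 1.
Proof.
rewrite /decay; case: ifP => _; first exact: ltr01.
by rewrite ltrBlDr ltrDl invr_gt0 mulr_gt0.
Qed.

Lemma decay_cost_le1 : (1 - decay) * (2 * M) <= 1.
Proof.
rewrite /decay; case: ifP => [|_]; first by rewrite subr0 mul1r.
by rewrite opprB addrC subrK mulVf // lt0r_neq0 // mulr_gt0.
Qed.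

Definition bump i : X := M *: delta i.

Lemma norm_bump i : `|bump i| = M.
Proof. by rewrite normrZ norm_delta mulr1 gtr0_norm. Qed.

Definition concentrated (a : X) (p K : nat) (S : nat -> seq nat) : Prop :=
  [/\ forall k, 0 <= l1val a k, forall k, (K <= k)%N -> l1val a k = 0,
      forall l, p \in S l, forall l, (size (S l) <= 2 ^ l)%N &
      forall K', (K <= K')%N -> mass K' predT a = M /\
        forall l, mass K' [pred k | k \notin S l] a <= M * decay ^+ l].

Definition concentrated_set : set X := [set a | exists p K S, concentrated a p K S].

Lemma norm_concentrated a p K S : concentrated a p K S -> `|a| = M.
Proof.
case=> a0 a_supp _ _ amass; rewrite (norm_finsupp_ge0 a0 a_supp).
by case: (amass K).
Qed.

Lemma concentrated_set_sub_ballM : concentrated_set `<=` ballM M.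
Proof. by move=> a [p [K [S /norm_concentrated aM]]]; rewrite /ballM /= aM. Qed.

Lemma concentrated_bump i : concentrated (bump i) i i.+1 (fun=> [:: i]).
Proof.
split => [k|k ik|l|l|K' iK]; rewrite ?l1valZ ?delta_val ?mem_seq1 ?expn_gt0 //.
- by rewrite mulr_ge0 ?ler0n ?ltW.
- by rewrite gtn_eqF ?mulr0.
split; first by rewrite massZ mass_delta ?mulr1.
move=> l; rewrite massZ mass_delta_out ?mulr0 ?mulr_ge0 ?exprn_ge0 ?decay_ge0 ?ltW //.
by rewrite inE mem_seq1 eqxx.
Qed.

Lemma bump_in_concentrated_set i : concentrated_set (bump i).
Proof. by exists i, i.+1, (fun=> [:: i]); apply: concentrated_bump. Qed.

Lemma dist_bump01 : `|bump 0 - bump 1| = 2 * M.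
Proof.
apply/le_anti/andP; split.
  by apply: le_trans (ler_normB _ _) _; rewrite !norm_bump mulr2n mulrDl mul1r.
have := mass_swap_le_dist 2 [pred k | k \in [:: 1%N]] (bump 0) (bump 1).
rewrite !massZ !mass_delta // !mass_delta_out // !mulr0 !mulr1 addr0 mulr0 subr0.
by rewrite mulr2n mulrDl mul1r.
Qed.

Definition merge_levels (Sx Sy : nat -> seq nat) (l : nat) : seq nat :=
  if l is l'.+1 then Sx l' ++ Sy l' else Sx 0%N.

Lemma concentrated_mix x y (t : R) px Kx Sx py Ky Sy :
  concentrated x px Kx Sx -> concentrated y py Ky Sy -> 0 <= t <= 1 ->
  concentrated (decay *: (t *: x + (1 - t) *: y) + (1 - decay) *: bump px)
    px (maxn (maxn Kx Ky) px.+1) (merge_levels Sx Sy).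
Proof.
move=> [x0 x_supp xS xSsz xmass] [y0 y_supp _ ySsz ymass] /andP[t0 t1].
have q0 := decay_ge0; have q1 := decay_lt1.
split => [k|k|l|l|K'].
- have := x0 k; have := y0 k; rewrite !(l1valD, l1valZ) delta_val => y0k x0k.
  have t1' : 0 <= 1 - t by rewrite subr_ge0.
  have q1' : 0 <= 1 - decay by rewrite subr_ge0 ltW.
  apply: addr_ge0; apply: mulr_ge0 => //; first by apply: addr_ge0; apply: mulr_ge0.
  by rewrite mulr_ge0 ?ler0n ?ltW.
- rewrite !geq_max => /andP[/andP[kx ky] kp].
  rewrite !(l1valD, l1valZ) delta_val x_supp // y_supp // gtn_eqF //.
  by rewrite !mulr0 !addr0 mulr0.
- by case: l => [|l] //=; rewrite mem_cat xS.
- by case: l => [|l] //=; rewrite size_cat expnS mul2n -addnn leq_add.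
rewrite !geq_max => /andP[/andP[xK yK] pK].
have [xM xoff] := xmass K' xK; have [yM yoff] := ymass K' yK.
rewrite !(massD, massZ); split; first by rewrite xM yM mass_delta //; ring.
move=> l; rewrite !(massD, massZ) mass_delta_out ?mulr0 ?addr0; last first.
  by case: l => [|l]; rewrite /= negbK ?mem_cat xS.
have mix_le a b c : a <= c -> b <= c -> decay * (t * a + (1 - t) * b) <= decay * c.
  by move=> ac bc; rewrite ler_wpM2l //; nra.
case: l => [|l] /=.
  rewrite expr0 mulr1; apply: le_trans (mix_le _ _ M _ _) _.
  - by have := xoff 0%N; rewrite expr0 mulr1.
  - by rewrite -yM; apply: mass_subset.
  - by rewrite ler_piMl // ltW.
rewrite exprS mulrCA; apply: mix_le.
- apply: le_trans (xoff l); apply: mass_subset => // k.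
  by rewrite /= mem_cat negb_or => /andP[].
- apply: le_trans (yoff l); apply: mass_subset => // k.
  by rewrite /= mem_cat negb_or => /andP[].
Qed.

Lemma dist_decay_mix (z : X) p : `|z| <= M ->
  `|z - (decay *: z + (1 - decay) *: bump p)| <= 1.
Proof.
move=> zM.
have -> : z - (decay *: z + (1 - decay) *: bump p) = (1 - decay) *: (z - bump p).
  by rewrite scalerBr scalerBl scale1r opprD addrA scalerBl scale1r.
rewrite normrZ ger0_norm ?subr_ge0 ?(ltW decay_lt1) //; apply: le_trans decay_cost_le1.
rewrite ler_wpM2l ?subr_ge0 ?(ltW decay_lt1) //; apply: le_trans (ler_normB _ _) _.
by rewrite norm_bump; lra.
Qed.

Lemma concentrated_set_approx_convex : approx_convex concentrated_set.
Proof.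
apply: near_mix_approx_convex => x y t [px [Kx [Sx xS]]] [py [Ky [Sy yS]]] t01.
exists (decay *: (t *: x + (1 - t) *: y) + (1 - decay) *: bump px).
  by do 3!eexists; apply: concentrated_mix xS yS t01.
apply: dist_decay_mix; apply: le_trans (ler_normD _ _) _.
have /andP[t0 t1] := t01.
rewrite !normrZ (norm_concentrated xS) (norm_concentrated yS).
by rewrite ger0_norm // ger0_norm ?subr_ge0 // -mulrDl subrKC mul1r.
Qed.

Definition flat N : X := \sum_(i < N) N%:R^-1 *: bump i.

Lemma flat_val N k : l1val (flat N) k = if (k < N)%N then N%:R^-1 * M else 0.
Proof.
rewrite l1val_sum; under eq_bigr do rewrite 2!l1valZ delta_val.
case: ltnP => kN.
  rewrite (bigD1 (Ordinal kN)) //= eqxx mulr1 big1 ?addr0 // => i.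
  by rewrite -val_eqE /= eq_sym => /negbTE ->; rewrite !mulr0.
by apply: big1 => i _; rewrite gtn_eqF ?mulr0 // (leq_trans (ltn_ord i) kN).
Qed.

Lemma flat_in_conv N : (0 < N)%N -> conv_hull concentrated_set (flat N).
Proof.
move=> N0; exists N, (fun=> N%:R^-1), (fun i : 'I_N => bump i).
split => [i|]; first by rewrite invr_ge0.
split; first by rewrite sumr_const card_ord -[_^-1 *+ N]mulr_natl mulfV ?pnatr_eq0 -?lt0n.
by split => // i; apply: bump_in_concentrated_set.
Qed.

Lemma mass_flat N K : (0 < N)%N -> (N <= K)%N -> mass K predT (flat N) = M.
Proof.
move=> N0 NK; rewrite /mass (@big_ord_support _ (fun k => l1val (flat N) k) N) //.
  under eq_bigr do rewrite flat_val ltn_ord.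
  rewrite sumr_const card_ord -[_ *+ N]mulr_natl mulrA mulfV ?mul1r //.
  by rewrite pnatr_eq0 -lt0n.
by move=> k kN; rewrite flat_val ltnNge kN.
Qed.

Lemma flat_far N a p K S l : (0 < N)%N -> concentrated a p K S ->
  2 * M - 2 * (M * decay ^+ l + (2 ^ l)%:R * (N%:R^-1 * M)) <= `|flat N - a|.
Proof.
move=> N0 [a0 a_supp _ Ssz amass]; set K' := maxn K N.
have [aM aoff] := amass K' (leq_maxl K N).
have flat_le k : 0 <= l1val (flat N) k <= N%:R^-1 * M.
  by rewrite flat_val; case: ifP; rewrite ?lexx ?mulr_ge0 ?invr_ge0 ?ler0n ?ltW.
have flat_S := mass_mem_le K' (S l) flat_le.
have size_S : (size (S l))%:R * (N%:R^-1 * M) <= (2 ^ l)%:R * (N%:R^-1 * M).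
  by rewrite ler_wpM2r ?ler_nat ?Ssz //; have /andP[/le_trans] := flat_le 0%N; apply.
have a_off : mass K' (predC [pred k | k \in S l]) a <= M * decay ^+ l := aoff l.
have := mass_swap_le_dist K' [pred k | k \in S l] (flat N) a.
by rewrite mass_flat ?leq_maxr // aM; lra.
Qed.

Lemma flat_error_small (e : R) : 0 < e -> exists l N, (0 < N)%N /\
  2 * (M * decay ^+ l + (2 ^ l)%:R * (N%:R^-1 * M)) <= e.
Proof.
move=> e0.
have decay_norm : `|decay| < 1 by rewrite ger0_norm ?decay_ge0 ?decay_lt1.
have /cvgrPdist_lt /(_ (M^-1 * (e / 4))) := cvg_expr decay_norm.
case=> [|l _ /(_ l (leqnn l))]; first by rewrite mulr_gt0 ?invr_gt0 ?divr_gt0.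
rewrite sub0r normrN ger0_norm ?exprn_ge0 ?decay_ge0 // ltr_pdivlMl // => decay_l.
set a : R := (2 ^ l)%:R; pose N := (Num.truncn (4 * a * M / e)).+1.
have N_gt : 4 * a * M / e < N%:R := Num.Theory.truncnS_gt _.
rewrite ltr_pdivrMr // in N_gt.
exists l, N; split => //.
have N_gt0 : 0 < N%:R :> R by rewrite ltr0n.
suff : a * (N%:R^-1 * M) <= e / 4 by lra.
by rewrite mulrCA ler_pdivrMl // mulrA; lra.
Qed.

Lemma far_point_conv_hull (e : R) : 0 < e ->
  exists2 b, conv_hull concentrated_set b &
    ((2 * M - e)%:E <= dist_set b concentrated_set)%E.
Proof.
move=> /flat_error_small[l [N [N0 small]]]; exists (flat N); first exact: flat_in_conv.
apply: dist_set_ge => a [p [K [S aS]]]; apply: le_trans (flat_far l N0 aS).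
by rewrite lerD2l lerN2.
Qed.

Lemma sup_dist_conv_hull_concentrated :
  ereal_sup [set dist_set b concentrated_set | b in conv_hull concentrated_set]
  = (2 * M)%:E.
Proof.
apply/le_anti/andP; split.
  apply: ge_ereal_sup => _ [b bA <-].
  apply: le_trans (dist_set_le _ (bump_in_concentrated_set 0)) _.
  rewrite lee_fin; apply: le_trans (ler_normB _ _) _; rewrite norm_bump.
  by have := conv_hull_sub_ballM concentrated_set_sub_ballM bA; rewrite /ballM /=; lra.
apply/lee_addgt0Pr => e e0; rewrite -leeBlDr //.
have [b bA far_b] := far_point_conv_hull e0.
by apply: le_ereal_sup_tmp; exists (dist_set b concentrated_set) => //; exists b.
Qed.

Lemma diam_concentrated_set : diam concentrated_set = (2 * M)%:E.
Proof.
apply/le_anti/andP; split; first exact: diam_sub_ballM concentrated_set_sub_ballM.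
apply: le_ereal_sup_tmp; exists (`|bump 0 - bump 1|)%:E; last by rewrite dist_bump01.
exists (bump 0); first exact: bump_in_concentrated_set.
by exists (bump 1); first exact: bump_in_concentrated_set.
Qed.

End Construction.

Theorem theorem7p1 (R : realType) (M : R) (hM : 0 < M) :
  exists (X : completeNormedModType R),
    iso_to_l1 X /\
    exists A : set X,
      A `<=` @ballM R X M /\ approx_convex A /\
      hausdorff A (conv_hull A) = (2 * M)%:E /\ diam A = (2 * M)%:E.
Proof.
exists (l1 R); split; first exact: l1_iso.
exists (concentrated_set M); split; first exact: concentrated_set_sub_ballM.
split; first exact: concentrated_set_approx_convex.
split; last exact: diam_concentrated_set.
rewrite hausdorff_subset ?sup_dist_conv_hull_concentrated //; last exact: sub_conv_hull.
by exists (bump M 0); apply: bump_in_concentrated_set.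
Qed.
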